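(* There is an absolute constant $C>0$ such that for all $n,m\ge3$ and $p\in(0,1)$, $$n^2\|\bar g_2\ast_2^0\bar g_2\|_2^2\le C\big(\operatorname{Var}[N_E]\big)^2\frac{1}{n^2\hat p(1-\hat p)},\qquad n^3\|\bar g_2\ast_2^1\bar g_2\|_2^2\le C\big(\operatorname{Var}[N_E]\big)^2\Big(\frac{1}{n^2\hat p(1-\hat p)}+\frac1n\Big),$$ where $N_E$ is the number of edges of $\mathcal G(n,m,p)$.
   Context: Random intersection graph $\mathcal G(n,m,p)$: vertices $v_1,\ldots,v_n$, attributes $a_1,\ldots,a_m$; each vertex chooses each attribute independently with probability $p$; two vertices are adjacent iff they chose a common attribute; $\hat p=1-(1-p^2)^m$. $\mu_{m,p}(x)=p^{|x|}(1-p)^{m-|x|}$ on $\{0,1\}^m$; $g(x,y)=1$ if $x_i=y_i=1$ for some $i$, else $0$; $\bar g_2=g-\hat p$. Norms are $L^2$ with respect to products of $\mu_{m,p}$. Contraction: for $f,h$ on $(\{0,1\}^m)^2$ and $0\le a\le 2$, $f\ast_2^ah(x_1,\ldots,x_{2-a})=\int_{(\{0,1\}^m)^a}f(w,x)h(w,x)\,d\mu_{m,p}^{\otimes a}(w)$ (so $\|\bar g_2\ast_2^0\bar g_2\|_2^2=\int\bar g_2^4$ and $\|\bar g_2\ast_2^1\bar g_2\|_2^2=\int(\int\bar g_2(x,y)^2d\mu_{m,p}(x))^2d\mu_{m,p}(y)$). *)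

From mathcomp Require Import all_boot all_order all_algebra.
From mathcomp Require Import reals.
Set Implicit Arguments. Unset Strict Implicit. Unset Printing Implicit Defensive.
Import Order.TTheory GRing.Theory Num.Theory.
Local Open Scope ring_scope.

Definition attr (m : nat) := {ffun 'I_m -> bool}.

Section RIG.
Variable R : realType.

Definition wt m (x : attr m) : nat := #|[set i | x i]|.

Definition mu m (p : R) (x : attr m) : R :=
  p ^+ wt x * (1 - p) ^+ (m - wt x).

Definition g m (x y : attr m) : R :=
  if [exists i, x i && y i] then 1 else 0.

Definition phat (m : nat) (p : R) : R := 1 - (1 - p ^+ 2) ^+ m.

Definition gbar2 m (p : R) (x y : attr m) : R := g x y - phat m p.

(* || gbar2 *_2^0 gbar2 ||_2^2 = \int gbar2^4 d(mu x mu) *)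
Definition contr0_sq m (p : R) : R :=
  \sum_(x : attr m) \sum_(y : attr m) mu p x * mu p y * gbar2 p x y ^+ 4.

(* || gbar2 *_2^1 gbar2 ||_2^2 = \int (\int gbar2(x,y)^2 dmu(x))^2 dmu(y) *)
Definition contr1_sq m (p : R) : R :=
  \sum_(y : attr m) mu p y * (\sum_(x : attr m) mu p x * gbar2 p x y ^+ 2) ^+ 2.

(* Vertex configurations of G(n,m,p): vertex v_i chooses attribute set X i;
   these are independent with law mu_{m,p}, so the configuration has the
   product weight below. *)
Definition config_weight n m (p : R) (X : {ffun 'I_n -> attr m}) : R :=
  \prod_(i < n) mu p (X i).

Definition NE n m (X : {ffun 'I_n -> attr m}) : R :=
  \sum_(i < n) \sum_(j < n | (i < j)%N) g (X i) (X j).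

Definition expect (n m : nat) (p : R) (F : {ffun 'I_n -> attr m} -> R) : R :=
  \sum_(X : {ffun 'I_n -> attr m}) config_weight p X * F X.

Definition Var_NE (n m : nat) (p : R) : R :=
  @expect n m p (fun X => NE X ^+ 2) - (@expect n m p (fun X => NE X)) ^+ 2.

End RIG.

(* N_E is a sum of edge indicators g(X_i, X_j) of i.i.d. attribute sets X_i.
   Let r(a) (adj_prob) be the probability that a vertex with attribute set a is
   adjacent to an independent vertex, D = phat (1 - phat) and v = Var[r(X)]
   (adj_var).  Two edge indicators have covariance D if they coincide, v if they
   share exactly one vertex and 0 if they are disjoint, hence
   Var[N_E] >= n(n-1)D/2 + n(n-1)(n-2)v/3, and for n >= 3 both
   n^2 D <= 3 Var[N_E] and 2 n^3 v <= 27 Var[N_E].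
   On the other side |gbar_2| <= 1 gives ||gbar_2 *_2^0 gbar_2||^2 <= E[gbar_2^2] = D,
   and the inner integral of gbar_2(., y)^2 is D + (1 - 2 phat)(r(y) - phat), so
   ||gbar_2 *_2^1 gbar_2||^2 <= 2 D^2 + 2 v.  Both bounds follow with C = 81. *)

From mathcomp Require Import all_boot all_order all_algebra.
From mathcomp Require Import reals.
From mathcomp Require Import ring lra zify.
Set Implicit Arguments. Unset Strict Implicit. Unset Printing Implicit Defensive.
Import Order.TTheory GRing.Theory Num.Theory.
Local Open Scope ring_scope.

Section AttributeLaw.
Variables (R : realType) (p : R).

Definition bern (b : bool) : R := if b then p else 1 - p.

Lemma muE m (x : attr m) : mu p x = \prod_t bern (x t).
Proof.
rewrite /mu (bigID (fun t => x t)) /=.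
rewrite (eq_bigr (fun _ => p)) => [|t ->] //.
rewrite [X in _ = _ * X](eq_bigr (fun _ => 1 - p)) => [|t /negbTE ->] //.
rewrite !prodr_const /wt cardsE; congr (_ * _ ^+ _).
by rewrite -[m in (m - _)%N]card_ord -(cardC [pred t | x t]) addKn.
Qed.

Lemma sum_attr_prod m (F : 'I_m -> bool -> R) :
  \sum_(x : attr m) \prod_t F t (x t) = \prod_t (F t true + F t false).
Proof. by rewrite -bigA_distr_bigA; apply: eq_bigr => t _; rewrite big_bool. Qed.

Lemma sum_mu m : \sum_(x : attr m) mu p x = 1.
Proof.
under eq_bigr do rewrite muE.
by rewrite (sum_attr_prod (fun _ => bern)) big1 // => t _; rewrite /bern addrC subrK.
Qed.

Lemma mu_ge0 m (x : attr m) : 0 <= p -> p <= 1 -> 0 <= mu p x.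
Proof. by move=> p0 p1; rewrite /mu mulr_ge0 // exprn_ge0 // subr_ge0. Qed.

Lemma g_prodE m (a b : attr m) : g R a b = 1 - \prod_t (1 - (a t && b t)%:R).
Proof.
rewrite /g; case: existsP => [[t abt]|noab].
  by rewrite (bigD1 t) //= abt subrr mul0r subr0.
rewrite big1 ?subrr // => t _.
by case: (boolP (a t && b t)) => [abt|]; [case: noab; exists t | rewrite subr0].
Qed.

Lemma gC m (a b : attr m) : g R a b = g R b a.
Proof. by rewrite /g; congr (if _ then _ else _); apply: eq_existsb => t; rewrite andbC. Qed.

Lemma g_idem m (a b : attr m) : g R a b ^+ 2 = g R a b.
Proof. by rewrite /g; case: ifP; rewrite ?expr1n ?expr0n. Qed.

Definition adj_prob m (a : attr m) : R := \sum_b mu p b * g R a b.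

Lemma adj_probE m (a : attr m) : adj_prob a = 1 - \prod_t (1 - p * (a t)%:R).
Proof.
have nonadj : \sum_b mu p b * (1 - g R a b) = \prod_t (1 - p * (a t)%:R).
  transitivity (\sum_(b : attr m) \prod_t (bern (b t) * (1 - (a t && b t)%:R))).
    by apply: eq_bigr => b _; rewrite g_prodE opprB addrC subrK muE -big_split.
  rewrite (sum_attr_prod (fun t b => bern b * (1 - (a t && b)%:R))).
  by apply: eq_bigr => t _; rewrite /bern andbT andbF; case: (a t) => /=; ring.
rewrite -nonadj /adj_prob.
under [X in _ = 1 - X]eq_bigr do rewrite mulrBr mulr1.
by rewrite sumrB sum_mu opprB addrC subrK.
Qed.

Lemma phatE m : phat m p = \sum_(a : attr m) mu p a * adj_prob a.
Proof.
have nonadj : \sum_(a : attr m) mu p a * \prod_t (1 - p * (a t)%:R) = (1 - p ^+ 2) ^+ m.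
  transitivity (\sum_(a : attr m) \prod_t (bern (a t) * (1 - p * (a t)%:R))).
    by apply: eq_bigr => a _; rewrite muE -big_split.
  rewrite (sum_attr_prod (fun t b => bern b * (1 - p * b%:R))).
  by rewrite -[m in RHS]card_ord -prodr_const; apply: eq_bigr => t _; rewrite /bern /=; ring.
rewrite /phat -nonadj.
under [RHS]eq_bigr do rewrite adj_probE mulrBr mulr1.
by rewrite sumrB sum_mu.
Qed.

Lemma phat_ge0 m : 0 <= p -> p <= 1 -> 0 <= phat m p.
Proof.
by move=> p0 p1; rewrite /phat subr_ge0 exprn_ile1 ?subr_ge0 ?exprn_ile1 // gerBl sqr_ge0.
Qed.

Lemma phat_le1 m : 0 <= p -> p <= 1 -> phat m p <= 1.
Proof. by move=> p0 p1; rewrite /phat gerBl exprn_ge0 // subr_ge0 exprn_ile1. Qed.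

Lemma phat_gt0 m : 0 < p -> p <= 1 -> (0 < m)%N -> 0 < phat m p.
Proof.
move=> p0 p1 m0; rewrite /phat subr_gt0 exprn_ilt1 -?lt0n //.
  by rewrite subr_ge0 exprn_ile1 // ltW.
by rewrite gtrBl exprn_gt0.
Qed.

Lemma phat_lt1 m : 0 <= p -> p < 1 -> phat m p < 1.
Proof. by move=> p0 p1; rewrite /phat gtrBl exprn_gt0 // subr_gt0 exprn_ilt1. Qed.

Definition adj_var m : R := \sum_(a : attr m) mu p a * (adj_prob a - phat m p) ^+ 2.

Lemma adj_var_ge0 m : 0 <= p -> p <= 1 -> 0 <= adj_var m.
Proof. by move=> p0 p1; apply: sumr_ge0 => a _; rewrite mulr_ge0 ?sqr_ge0 ?mu_ge0. Qed.

Lemma sum_adj_prob_sq m :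
  \sum_(a : attr m) mu p a * adj_prob a ^+ 2 = adj_var m + phat m p ^+ 2.
Proof.
have expand : adj_var m = \sum_(a : attr m) mu p a * adj_prob a ^+ 2
    - 2 * phat m p * \sum_(a : attr m) mu p a * adj_prob a
    + phat m p ^+ 2 * \sum_(a : attr m) mu p a.
  by rewrite /adj_var !mulr_sumr -sumrB -big_split /=; apply: eq_bigr => a _; ring.
by rewrite expand -phatE sum_mu; ring.
Qed.

Lemma sum_mu_sqr_dev m (y : attr m) (c : R) :
  \sum_x mu p x * (g R x y - c) ^+ 2 = (1 - 2 * c) * adj_prob y + c ^+ 2.
Proof.
transitivity (\sum_x ((1 - 2 * c) * (mu p x * g R y x) + c ^+ 2 * mu p x)).
  by apply: eq_bigr => x _; rewrite sqrrB g_idem gC; ring.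
by rewrite big_split /= -!mulr_sumr sum_mu mulr1.
Qed.

End AttributeLaw.

Section Configurations.
Variables (R : realType) (p : R) (m : nat).
Local Notation config n := {ffun 'I_n -> attr m}.

Lemma expect_sum n (I : Type) (r : seq I) (P : pred I) (F : I -> config n -> R) :
  expect p (fun X => \sum_(i <- r | P i) F i X) = \sum_(i <- r | P i) expect p (F i).
Proof. by rewrite /expect exchange_big; apply: eq_bigr => X _; rewrite mulr_sumr. Qed.

Lemma expectZ n (c : R) (F : config n -> R) : expect p (fun X => c * F X) = c * expect p F.
Proof. by rewrite /expect mulr_sumr; apply: eq_bigr => X _; rewrite mulrCA. Qed.

Lemma eq_expect n (F G : config n -> R) : F =1 G -> expect p F = expect p G.
Proof. by move=> FG; apply: eq_bigr => X _; rewrite FG. Qed.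

Lemma expect_prod n (f : 'I_n -> attr m -> R) :
  expect p (fun X => \prod_i f i (X i)) = \prod_i \sum_x mu p x * f i x.
Proof.
rewrite bigA_distr_bigA; apply: eq_bigr => X _.
by rewrite /config_weight [RHS]big_split.
Qed.

Lemma expect_eq_coords n k (s : 'I_k -> 'I_n) (Y : 'I_k -> attr m) : injective s ->
  expect p (fun X : config n => \prod_j (X (s j) == Y j)%:R) = \prod_j mu p (Y j).
Proof.
move=> s_inj.
rewrite (@eq_expect _ _ (fun X => \prod_i \prod_(j | s j == i) (X i == Y j)%:R)); last first.
  move=> X; rewrite (partition_big s xpredT) //=.
  by apply: eq_bigr => i _; apply: eq_bigr => j /eqP <-.
rewrite (expect_prod (fun i x => \prod_(j | s j == i) (x == Y j)%:R)).
rewrite [RHS](partition_big s xpredT) //=; apply: eq_bigr => i _.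
have [j sj | s_out] := pickP (fun j => s j == i); last first.
  rewrite [RHS]big_pred0 // -[RHS](sum_mu p m).
  by apply: eq_bigr => x _; rewrite big_pred0 ?mulr1.
have fiber : (fun j' => s j' == i) =1 pred1 j.
  move=> j' /=; apply/eqP/eqP => [sj'|->]; last exact/eqP.
  by apply: s_inj; rewrite sj' (eqP sj).
rewrite (big_pred1 _ fiber) (bigD1 (Y j)) //= (big_pred1 _ fiber) eqxx mulr1.
by rewrite big1 ?addr0 // => x /negbTE Yx; rewrite (big_pred1 _ fiber) Yx mulr0.
Qed.

Lemma sum_ffun_indicator (T : finType) k (F : {ffun 'I_k -> T} -> R) (Z : {ffun 'I_k -> T}) :
  \sum_Y F Y * \prod_j (Z j == Y j)%:R = F Z.
Proof.
rewrite (bigD1 Z) //= big1 ?mulr1 ?big1 ?addr0 // => [Y YZ | j _]; last by rewrite eqxx.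
have [j Zj] : exists j, Z j != Y j.
  apply/existsP; rewrite -negb_forall; apply: contra YZ => /forallP ZY.
  by apply/eqP/ffunP => j; exact/esym/eqP.
by rewrite (bigD1 j) //= (negbTE Zj) mul0r mulr0.
Qed.

Lemma expect_tnth n k (t : k.-tuple 'I_n) (F : config k -> R) : uniq t ->
  expect p (fun X : config n => F [ffun j => X (tnth t j)]) = expect p F.
Proof.
move=> /tuple_uniqP t_inj.
rewrite (@eq_expect _ _ (fun X => \sum_Y F Y * \prod_j (X (tnth t j) == Y j)%:R)); last first.
  move=> X; rewrite -(sum_ffun_indicator F); apply: eq_bigr => Y _.
  by under eq_bigr do rewrite ffunE.
rewrite expect_sum; apply: eq_bigr => Y _.
by rewrite expectZ expect_eq_coords // mulrC.
Qed.

Definition ffun_cons (T : Type) k (a : T) (Y : {ffun 'I_k -> T}) : {ffun 'I_k.+1 -> T} :=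
  [ffun j => oapp Y a (unlift ord0 j)].

Lemma ffun_cons0 (T : Type) k (a : T) (Y : {ffun 'I_k -> T}) : ffun_cons a Y ord0 = a.
Proof. by rewrite ffunE unlift_none. Qed.

Lemma ffun_consS (T : Type) k (a : T) (Y : {ffun 'I_k -> T}) j :
  ffun_cons a Y (lift ord0 j) = Y j.
Proof. by rewrite ffunE liftK. Qed.

Lemma sum_ffun_cons (T : finType) k (G : {ffun 'I_k.+1 -> T} -> R) :
  \sum_Z G Z = \sum_a \sum_Y G (ffun_cons a Y).
Proof.
rewrite pair_bigA /= (reindex (fun u => ffun_cons u.1 u.2)) //=.
exists (fun Z => (Z ord0, [ffun j => Z (lift ord0 j)])) => [[a Y]|Z] _ /=.
  by rewrite ffun_cons0; congr pair; apply/ffunP => j; rewrite ffunE ffun_consS.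
by apply/ffunP => j; rewrite ffunE; case: unliftP => [j'|] -> /=; rewrite ?ffunE.
Qed.

Lemma expect_cons k (F : config k.+1 -> R) :
  expect p F = \sum_a mu p a * expect p (fun Y : config k => F (ffun_cons a Y)).
Proof.
rewrite /expect sum_ffun_cons; apply: eq_bigr => a _; rewrite mulr_sumr.
apply: eq_bigr => Y _; rewrite /config_weight big_ord_recl ffun_cons0 -mulrA.
by under eq_bigr do rewrite ffun_consS.
Qed.

Lemma expect_config0 (F : config 0 -> R) (Y : config 0) : expect p F = F Y.
Proof.
rewrite /expect (bigD1 Y) //= big1 ?addr0 => [|Z ZY].
  by rewrite /config_weight big_ord0 mul1r.
by case/eqP: ZY; apply/ffunP => -[].
Qed.

Lemma expect_pair n (i j : 'I_n) (F : attr m -> attr m -> R) : i != j ->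
  expect p (fun X : config n => F (X i) (X j)) = \sum_a mu p a * \sum_b mu p b * F a b.
Proof.
move=> ij; pose F2 (Y : config 2) := F (Y ord0) (Y (lift ord0 ord0)).
transitivity (expect p (fun X : config n => F2 [ffun t => X (tnth [tuple i; j] t)])).
  by apply: eq_expect => X; rewrite /F2 !ffunE.
rewrite expect_tnth /=; last by rewrite inE ij.
rewrite expect_cons; apply: eq_bigr => a _; rewrite expect_cons; congr (_ * _).
apply: eq_bigr => b _; rewrite (expect_config0 _ [ffun=> a]).
by rewrite /F2 ffun_consS !ffun_cons0.
Qed.

Lemma expect_triple n (i j k : 'I_n) (F : attr m -> attr m -> attr m -> R) :
  uniq [:: i; j; k] ->
  expect p (fun X : config n => F (X i) (X j) (X k))
  = \sum_a mu p a * \sum_b mu p b * \sum_c mu p c * F a b c.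
Proof.
move=> ijk.
pose F3 (Y : config 3) := F (Y ord0) (Y (lift ord0 ord0)) (Y (lift ord0 (lift ord0 ord0))).
transitivity (expect p (fun X : config n => F3 [ffun t => X (tnth [tuple i; j; k] t)])).
  by apply: eq_expect => X; rewrite /F3 !ffunE.
rewrite expect_tnth // expect_cons; apply: eq_bigr => a _; congr (_ * _).
rewrite expect_cons; apply: eq_bigr => b _; congr (_ * _).
rewrite expect_cons; apply: eq_bigr => c _; congr (_ * _).
by rewrite (expect_config0 _ [ffun=> a]) /F3 !ffun_consS !ffun_cons0.
Qed.

Lemma expect_quad n (i j k l : 'I_n) (F : attr m -> attr m -> attr m -> attr m -> R) :
  uniq [:: i; j; k; l] ->
  expect p (fun X : config n => F (X i) (X j) (X k) (X l))
  = \sum_a mu p a * \sum_b mu p b * \sum_c mu p c * \sum_d mu p d * F a b c d.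
Proof.
move=> ijkl.
pose F4 (Y : config 4) := F (Y ord0) (Y (lift ord0 ord0)) (Y (lift ord0 (lift ord0 ord0)))
  (Y (lift ord0 (lift ord0 (lift ord0 ord0)))).
transitivity (expect p (fun X : config n => F4 [ffun t => X (tnth [tuple i; j; k; l] t)])).
  by apply: eq_expect => X; rewrite /F4 !ffunE.
rewrite expect_tnth // expect_cons; apply: eq_bigr => a _; congr (_ * _).
rewrite expect_cons; apply: eq_bigr => b _; congr (_ * _).
rewrite expect_cons; apply: eq_bigr => c _; congr (_ * _).
rewrite expect_cons; apply: eq_bigr => d _; congr (_ * _).
by rewrite (expect_config0 _ [ffun=> a]) /F4 !ffun_consS !ffun_cons0.
Qed.

End Configurations.

Section RealInequalities.
Variable R : realFieldType.
Implicit Types q r x N D v V : R.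

Lemma sqr_sqr_le x : x ^+ 2 <= 1 -> x ^+ 4 <= x ^+ 2.
Proof. by move=> x2; rewrite (exprM x 2 2) -[X in _ <= X]mulr1 expr2 ler_wpM2l ?sqr_ge0. Qed.

Lemma sqr_affine_dev_le q r : 0 <= q <= 1 ->
  ((1 - 2 * q) * r + q ^+ 2) ^+ 2 <= 2 * (q - q ^+ 2) ^+ 2 + 2 * (r - q) ^+ 2.
Proof.
case/andP=> q0 q1.
have -> : (1 - 2 * q) * r + q ^+ 2 = (q - q ^+ 2) + (1 - 2 * q) * (r - q) by ring.
have h1 : 0 <= ((q - q ^+ 2) - (1 - 2 * q) * (r - q)) ^+ 2 := sqr_ge0 _.
have h2 : 0 <= q * (1 - q) * (r - q) ^+ 2 by rewrite mulr_ge0 ?sqr_ge0 ?mulr_ge0 ?subr_ge0.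
nra.
Qed.

Lemma var_ge_D N D v V : 3 <= N -> 0 <= D -> 0 <= v ->
  3 * D * N * (N - 1) + 2 * v * N * (N - 1) * (N - 2) <= 6 * V -> N ^+ 2 * D <= 3 * V.
Proof.
move=> N3 D0 v0 VDv.
have h1 : 0 <= D * N * (N - 3) by rewrite !mulr_ge0 ?subr_ge0 //; lra.
have h2 : 0 <= v * N * (N - 1) * (N - 2) by rewrite !mulr_ge0 ?subr_ge0 //; lra.
nra.
Qed.

Lemma var_ge_v N D v V : 3 <= N -> 0 <= D -> 0 <= v ->
  3 * D * N * (N - 1) + 2 * v * N * (N - 1) * (N - 2) <= 6 * V -> 2 * N ^+ 3 * v <= 27 * V.
Proof.
move=> N3 D0 v0 VDv.
have h1 : 0 <= D * N * (N - 1) by rewrite !mulr_ge0 ?subr_ge0 //; lra.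
have h2 : 0 <= v * N * (7 * N - 6) * (N - 3) by rewrite !mulr_ge0 ?subr_ge0 //; lra.
nra.
Qed.

Lemma scaled_contr0_le N D V c0 : 0 < N -> 0 < D -> N ^+ 2 * D <= 3 * V -> c0 <= D ->
  N ^+ 2 * c0 <= 9 * (V ^+ 2 / (N ^+ 2 * D)).
Proof.
move=> N0 D0 NDV c0D; have ND0 : 0 < N ^+ 2 * D by rewrite mulr_gt0 ?exprn_gt0.
rewrite mulrA ler_pdivlMr //; apply: (@le_trans _ _ ((N ^+ 2 * D) ^+ 2)).
  by rewrite [X in _ <= X]expr2 (ler_wpM2r (ltW ND0)) // ler_wpM2l // exprn_ge0 // ltW.
have -> : 9 * V ^+ 2 = (3 * V) ^+ 2 by ring.
by rewrite lerXn2r ?nnegrE ?(ltW ND0) ?(le_trans (ltW ND0) NDV).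
Qed.

Lemma scaled_contr1_le N D v V c1 : 0 < N -> 0 < D -> 0 <= v ->
  N ^+ 2 * D <= 3 * V -> 2 * N ^+ 3 * v <= 27 * V -> c1 <= 2 * D ^+ 2 + 2 * v ->
  N ^+ 3 * c1 <= 18 * (V ^+ 2 / N) + 81 * (V ^+ 2 / (N ^+ 2 * D)).
Proof.
move=> N0 D0 v0 NDV NvV c1Dv; have ND0 : 0 < N ^+ 2 * D by rewrite mulr_gt0 ?exprn_gt0.
apply: (@le_trans _ _ (N ^+ 3 * (2 * D ^+ 2) + N ^+ 3 * (2 * v))).
  by rewrite -mulrDr ler_wpM2l // exprn_ge0 // ltW.
apply: lerD; rewrite [X in _ <= X]mulrA ler_pdivlMr //.
  have -> : N ^+ 3 * (2 * D ^+ 2) * N = 2 * (N ^+ 2 * D) ^+ 2 by ring.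
  have -> : 18 * V ^+ 2 = 2 * (3 * V) ^+ 2 by ring.
  by rewrite ler_wpM2l // lerXn2r ?nnegrE ?(ltW ND0) ?(le_trans (ltW ND0) NDV).
have -> : N ^+ 3 * (2 * v) * (N ^+ 2 * D) = (N ^+ 2 * D) * (2 * N ^+ 3 * v) by ring.
have -> : 81 * V ^+ 2 = (3 * V) * (27 * V) by ring.
by rewrite ler_pM ?(ltW ND0) // !mulr_ge0 // ?exprn_ge0 // ltW.
Qed.

End RealInequalities.

Section PairSums.
Variable R : comPzRingType.

Lemma sqr_sum_pairs n (F : 'I_n -> 'I_n -> R) :
  (\sum_(i < n) \sum_(j < n | (i < j)%N) F i j) ^+ 2 =
  \sum_(i < n) \sum_(j < n | (i < j)%N) \sum_(k < n) \sum_(l < n | (k < l)%N) F i j * F k l.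
Proof.
rewrite expr2 mulr_suml; apply: eq_bigr => i _; rewrite mulr_suml; apply: eq_bigr => j _.
by rewrite mulr_sumr; apply: eq_bigr => k _; rewrite mulr_sumr.
Qed.

Lemma sum_const_gt n (i : nat) (c : R) : \sum_(l < n | (i < l)%N) c = (n - i.+1)%:R * c.
Proof. by rewrite mulr_natl -sumr_const_nat big_geq_mkord. Qed.

Lemma sum_pairs_sharing_first n (D v : R) :
  6 * \sum_(i < n) \sum_(j < n | (i < j)%N) \sum_(k < n) \sum_(l < n | (k < l)%N)
     (((i == k) && (j == l))%:R * D + ((i == k) && (j != l))%:R * v)
  = 3 * D * n%:R * (n%:R - 1) + 2 * v * n%:R * (n%:R - 1) * (n%:R - 2).
Proof.
have inner (i j : 'I_n) : (i < j)%N ->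
    \sum_(k < n) \sum_(l < n | (k < l)%N)
      (((i == k) && (j == l))%:R * D + ((i == k) && (j != l))%:R * v)
    = D + ((n - i.+1)%:R - 1) * v.
  move=> ij; transitivity (\sum_(k < n) (i == k)%:R *
      \sum_(l < n | (k < l)%N) ((j == l)%:R * (D - v) + v)).
    apply: eq_bigr => k _; rewrite mulr_sumr; apply: eq_bigr => l _.
    by case: (i == k); case: (j == l) => /=; ring.
  rewrite (bigD1 i) //= eqxx mul1r [X in _ + X]big1 ?addr0 => [|k /negbTE]; last first.
    by rewrite eq_sym => ->; rewrite mul0r.
  rewrite big_split /= sum_const_gt (bigD1 j) //= eqxx [X in _ + X + _]big1.
    by rewrite mul1r addr0; ring.
  by move=> l /andP[_ /negbTE]; rewrite eq_sym => ->; rewrite mul0r.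
have closed_form k : 6 * \sum_(i < k) (i%:R * (D + (i%:R - 1) * v)) =
    3 * D * k%:R * (k%:R - 1) + 2 * v * k%:R * (k%:R - 1) * (k%:R - 2).
  elim: k => [|k IH]; first by rewrite big_ord0; ring.
  by rewrite big_ord_recr /= mulrDr IH -addn1 natrD; ring.
rewrite -closed_form; congr (_ * _).
under eq_bigr => i _ do under eq_bigr => j ij do rewrite inner //.
under eq_bigr do rewrite sum_const_gt.
rewrite (reindex_inj rev_ord_inj) /=; apply: eq_bigr => i _.
by have -> : (n - (n - i.+1).+1)%N = i by have := ltn_ord i; lia.
Qed.

End PairSums.

Section EdgeMoments.
Variables (R : realType) (p : R) (m : nat).
Local Notation config n := {ffun 'I_n -> attr m}.

Ltac distinct_ords :=
  rewrite /= ?inE; repeat match goal with H : is_true (_ != _) |- _ => move: H end;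
  rewrite -?val_eqE /=; lia.

Lemma expect_edge n (i j : 'I_n) : i != j ->
  expect p (fun X : config n => g R (X i) (X j)) = phat m p.
Proof. by move=> ij; rewrite expect_pair // phatE. Qed.

Lemma expect_edges_common n (i j k : 'I_n) : uniq [:: i; j; k] ->
  expect p (fun X : config n => g R (X i) (X j) * g R (X i) (X k))
  = adj_var p m + phat m p ^+ 2.
Proof.
move=> ijk; rewrite (expect_triple p (fun a b c => g R a b * g R a c)) //.
rewrite -sum_adj_prob_sq; apply: eq_bigr => a _; congr (_ * _).
rewrite expr2 /adj_prob mulr_suml; apply: eq_bigr => b _.
by rewrite -mulrA !mulr_sumr; apply: eq_bigr => c _; ring.
Qed.

Lemma expect_edges_disjoint n (i j k l : 'I_n) : uniq [:: i; j; k; l] ->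
  expect p (fun X : config n => g R (X i) (X j) * g R (X k) (X l)) = phat m p ^+ 2.
Proof.
move=> ijkl; rewrite (expect_quad p (fun a b c d => g R a b * g R c d)) //.
rewrite expr2 [X in X * _]phatE mulr_suml; apply: eq_bigr => a _.
rewrite -mulrA /adj_prob mulr_suml; congr (_ * _); apply: eq_bigr => b _.
rewrite -mulrA phatE !mulr_sumr; apply: eq_bigr => c _.
by rewrite /adj_prob !mulr_sumr; apply: eq_bigr => d _; ring.
Qed.

Lemma Var_NE_cov n : Var_NE n m p =
  \sum_(i < n) \sum_(j < n | (i < j)%N) \sum_(k < n) \sum_(l < n | (k < l)%N)
    (expect p (fun X : config n => g R (X i) (X j) * g R (X k) (X l)) - phat m p ^+ 2).
Proof.
rewrite /Var_NE.
have -> : expect p (fun X : config n => NE R X) = \sum_(i < n) \sum_(j < n | (i < j)%N) phat m p.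
  rewrite expect_sum; apply: eq_bigr => i _; rewrite expect_sum; apply: eq_bigr => j ij.
  by rewrite expect_edge // neq_ltn ij.
rewrite sqr_sum_pairs; under eq_expect => X do rewrite sqr_sum_pairs.
rewrite expect_sum -sumrB; apply: eq_bigr => i _; rewrite expect_sum -sumrB; apply: eq_bigr => j _.
rewrite expect_sum -sumrB; apply: eq_bigr => k _; rewrite expect_sum -sumrB; apply: eq_bigr => l _.
by rewrite expr2.
Qed.

Hypotheses (p_ge0 : 0 <= p) (p_le1 : p <= 1).

(* The other pairs of edges sharing one vertex also have covariance [adj_var];
   only its sign is needed here. *)
Lemma edge_cov_ge n (i j k l : 'I_n) : (i < j)%N -> (k < l)%N ->
  ((i == k) && (j == l))%:R * (phat m p - phat m p ^+ 2)
    + ((i == k) && (j != l))%:R * adj_var p m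
  <= expect p (fun X : config n => g R (X i) (X j) * g R (X k) (X l)) - phat m p ^+ 2.
Proof.
have v0 := adj_var_ge0 m p_ge0 p_le1.
have [<-|ik] := eqVneq i k.
  have [<-|jl] := eqVneq j l => ij kl; rewrite /= ?mulr1n ?mulr0n ?mul0r ?mul1r ?addr0 ?add0r.
    under eq_expect => X do rewrite -expr2 g_idem.
    by rewrite expect_edge //; distinct_ords.
  by rewrite expect_edges_common ?addrK //; distinct_ords.
rewrite /= !mul0r addr0 subr_ge0.
have [<-|jl] := eqVneq j l => [ij kj|].
  under eq_expect => X do rewrite gC [g R (X k) _]gC.
  by rewrite expect_edges_common ?lerDr //; distinct_ords.
have [<-|il] := eqVneq i l => [ij ki|].
  under eq_expect => X do rewrite [g R (X k) _]gC.
  by rewrite expect_edges_common ?lerDr //; distinct_ords.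
have [<-|jk] := eqVneq j k => ij kl.
  under eq_expect => X do rewrite [g R (X i) _]gC.
  by rewrite expect_edges_common ?lerDr //; distinct_ords.
by rewrite expect_edges_disjoint //; distinct_ords.
Qed.

Lemma Var_NE_ge n :
  3 * (phat m p - phat m p ^+ 2) * n%:R * (n%:R - 1)
    + 2 * adj_var p m * n%:R * (n%:R - 1) * (n%:R - 2)
  <= 6 * Var_NE n m p.
Proof.
rewrite Var_NE_cov -sum_pairs_sharing_first ler_wpM2l //.
apply: ler_sum => i _; apply: ler_sum => j ij; apply: ler_sum => k _; apply: ler_sum => l kl.
exact: edge_cov_ge.
Qed.

End EdgeMoments.

Section Contractions.
Variables (R : realType) (p : R) (m : nat).
Hypotheses (p_ge0 : 0 <= p) (p_le1 : p <= 1).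

Lemma gbar2_sqr_le1 (x y : attr m) : gbar2 p x y ^+ 2 <= 1.
Proof.
have q0 := phat_ge0 m p_ge0 p_le1; have q1 := phat_le1 m p_ge0 p_le1.
by rewrite /gbar2 /g; case: ifP => _; rewrite ?sub0r ?sqrrN exprn_ile1 // ?subr_ge0 // gerBl.
Qed.

Lemma contr0_sq_le : contr0_sq m p <= phat m p - phat m p ^+ 2.
Proof.
apply: (@le_trans _ _
    (\sum_(x : attr m) \sum_(y : attr m) mu p x * mu p y * gbar2 p x y ^+ 2)).
  apply: ler_sum => x _; apply: ler_sum => y _.
  by rewrite ler_wpM2l ?sqr_sqr_le ?gbar2_sqr_le1 // mulr_ge0 ?mu_ge0.
rewrite exchange_big /=.
under eq_bigr => y _ do under eq_bigr => x _ do rewrite -mulrA mulrCA.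
under eq_bigr do rewrite -mulr_sumr /gbar2 sum_mu_sqr_dev mulrDr mulrCA.
by rewrite big_split /= -mulr_sumr -mulr_suml -phatE sum_mu mul1r; lra.
Qed.

Lemma contr1_sq_le : contr1_sq m p <= 2 * (phat m p - phat m p ^+ 2) ^+ 2 + 2 * adj_var p m.
Proof.
have q01 : 0 <= phat m p <= 1 by rewrite phat_ge0 ?phat_le1.
rewrite /contr1_sq /gbar2; under eq_bigr do rewrite sum_mu_sqr_dev.
apply: (@le_trans _ _ (\sum_(y : attr m) mu p y *
    (2 * (phat m p - phat m p ^+ 2) ^+ 2 + 2 * (adj_prob p y - phat m p) ^+ 2))).
  by apply: ler_sum => y _; rewrite ler_wpM2l ?mu_ge0 ?sqr_affine_dev_le.
rewrite /adj_var mulr_sumr -[X in _ <= X + _]mulr1 -(sum_mu p m) mulr_sumr -big_split /=.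
by apply: ler_sum => y _; lra.
Qed.

End Contractions.

Theorem lemma7p1 (R : realType) :
  exists C : R, 0 < C /\
    forall (n m : nat) (p : R), (3 <= n)%N -> (3 <= m)%N -> 0 < p -> p < 1 ->
      (n%:R ^+ 2 * contr0_sq m p
         <= C * (Var_NE n m p) ^+ 2
              * (1 / (n%:R ^+ 2 * phat m p * (1 - phat m p))))
      /\
      (n%:R ^+ 3 * contr1_sq m p
         <= C * (Var_NE n m p) ^+ 2
              * (1 / (n%:R ^+ 2 * phat m p * (1 - phat m p)) + 1 / n%:R)).
Proof.
exists 81; split=> // n m p n3 m3 p0 p1.
have [p_ge0 p_le1] := (ltW p0, ltW p1).
have q0 := phat_gt0 p0 p_le1 (ltnW (ltnW m3)); have q1 := phat_lt1 m p_ge0 p1.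
have D0 : 0 < phat m p - phat m p ^+ 2 by nra.
have N3 : 3 <= n%:R :> R by rewrite (ler_nat R 3 n).
have N0 : 0 < n%:R :> R by lra.
have v0 := adj_var_ge0 m p_ge0 p_le1.
have V_ge := Var_NE_ge m p_ge0 p_le1 n.
have NDV := var_ge_D N3 (ltW D0) v0 V_ge; have NvV := var_ge_v N3 (ltW D0) v0 V_ge.
have c0 := scaled_contr0_le N0 D0 NDV (contr0_sq_le m p_ge0 p_le1).
have c1 := scaled_contr1_le N0 D0 v0 NDV NvV (contr1_sq_le m p_ge0 p_le1).
have -> : n%:R ^+ 2 * phat m p * (1 - phat m p) = n%:R ^+ 2 * (phat m p - phat m p ^+ 2).
  by ring.
set d := n%:R ^+ 2 * (phat m p - phat m p ^+ 2) in c0 c1 *.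
have X0 : 0 <= Var_NE n m p ^+ 2 / d.
  by rewrite divr_ge0 ?sqr_ge0 // ltW // mulr_gt0 ?exprn_gt0.
have Y0 : 0 <= Var_NE n m p ^+ 2 / n%:R by rewrite divr_ge0 ?sqr_ge0 // ltW.
rewrite mulrDr !div1r -!(mulrA 81); split; lra.
Qed.
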